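(* Consider an MWSBP instance with $s_i=w_i$ for all $i$, and let $W_1\ge W_2\ge\cdots\ge W_p$ be the weights of the bins output by WFFI-R. If $p\ge 2$ and $W_{p-1}>\frac23$, then the cost of the WFFI-R output is at most $\frac32\cdot\mathtt{OPT}$.
   Context: Min-Weighted Sum Bin Packing (MWSBP): an instance consists of $n$ items with sizes $s_i\in(0,1]$ and weights $w_i>0$. A feasible solution is a partition of $[n]$ into bins $B_1,\ldots,B_p$ with $\sum_{i\in B_k}s_i\le 1$; its cost is $\sum_{k=1}^p k\sum_{i\in B_k}w_i$; $\mathtt{OPT}$ is the minimum cost. The WFFI-R algorithm: sort the items in nondecreasing order of $s_i/w_i$ (ties broken arbitrarily); process them with First-Fit, i.e., put each item into the earliest-opened bin in which it still fits, opening a new bin if it fits in none; finally, reorder the bins in nonincreasing order of total weight. Its cost is $\sum_{k=1}^p k W_k$. *)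

From HB Require Import structures.
From mathcomp Require Import all_boot all_order all_algebra.
Set Implicit Arguments. Unset Strict Implicit. Unset Printing Implicit Defensive.
Import Order.TTheory GRing.Theory Num.Theory.
Local Open Scope ring_scope.

Section MWSBP.
Variables (R : realFieldType) (n : nat).
Variables (s w : 'I_n -> R).

Definition bin_size (b : seq 'I_n) : R := \sum_(j <- b) s j.
Definition bin_weight (b : seq 'I_n) : R := \sum_(j <- b) w j.

Definition feasible (B : seq (seq 'I_n)) : Prop :=
  perm_eq (flatten B) (enum 'I_n) /\
  (forall b, b \in B -> b != [::] /\ bin_size b <= 1).

Definition cost (B : seq (seq 'I_n)) : R :=
  \sum_(k < size B) (k.+1)%:R * bin_weight (nth [::] B k).

Fixpoint ff_insert (i : 'I_n) (bins : seq (seq 'I_n)) : seq (seq 'I_n) :=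
  match bins with
  | [::] => [:: [:: i]]
  | b :: bs => if bin_size b + s i <= 1 then rcons b i :: bs
               else b :: ff_insert i bs
  end.

Definition first_fit (order : seq 'I_n) : seq (seq 'I_n) :=
  foldl (fun bins i => ff_insert i bins) [::] order.

(* An admissible processing order for WFFI-R: all items, in nondecreasing
   order of s_i / w_i (ties broken arbitrarily). *)
Definition wffi_order (order : seq 'I_n) : bool :=
  perm_eq order (enum 'I_n) &&
  sorted (fun i j => s i / w i <= s j / w j) order.

Definition wffir (order : seq 'I_n) : seq (seq 'I_n) :=
  sort (fun b1 b2 => bin_weight b2 <= bin_weight b1) (first_fit order).

End MWSBP.

From HB Require Import structures.
From mathcomp Require Import all_boot all_order all_algebra.
From mathcomp Require Import lra zify.
Import Order.TTheory GRing.Theory Num.Theory.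
Local Open Scope ring_scope.
Set Implicit Arguments.
Unset Strict Implicit.

(* Let W be the total weight of the items.  Since s_i = w_i,
   every feasible bin has weight at most 1, and the cost of any solution
   only depends on its sequence of bin weights x_1, ..., x_q through
   sum_k k x_k = sum_k (x_k + ... + x_q).  For weights in [0, 1] summing to
   W this is at least W (W + 1) / 2, a lower bound on OPT.  The WFFI-R
   output has p bins of total weight W sorted by nonincreasing weight, so
   each of its first p - 1 bins weighs at least W_{p-1} > 2/3; hence its
   cost is at most p W - p (p - 1) / 3.  An elementary quadratic inequality
   shows p W - p (p - 1) / 3 <= 3/2 * W (W + 1) / 2 whenever p >= 2.
   The file first studies the cost of a weight sequence (rank_cost), then
   shows that First-Fit and the final sorting only permute the items, and
   finally combines these facts. *)

Section RankCost.
Variable R : realFieldType.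

(* [rank_cost xs] is sum_k (k+1) xs_k, computed as the sum of all suffix
   sums of xs; this is the cost of a solution whose bin weights are xs. *)
Fixpoint rank_cost (xs : seq R) : R :=
  if xs is _ :: xs' then \sum_(y <- xs) y + rank_cost xs' else 0.

(* Lower bound: with entries in [0, 1] and total S, the cost is at least
   S (S + 1) / 2 (the value for S bins of weight exactly 1). *)
Lemma rank_cost_lower (xs : seq R) :
  (forall x, x \in xs -> 0 <= x <= 1) ->
  let S := \sum_(y <- xs) y in S * (S + 1) / 2 <= rank_cost xs.
Proof.
elim: xs => [|x xs IH] Hxs /=; first by rewrite big_nil; lra.
have Hx : 0 <= x <= 1 by apply: Hxs; rewrite mem_head.
have Htail y : y \in xs -> 0 <= y <= 1.
  by move=> hy; apply: Hxs; rewrite inE hy orbT.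
have HT : 0 <= \sum_(y <- xs) y.
  by rewrite big_seq; apply: sumr_ge0 => y /Htail /andP[].
move: (IH Htail) HT Hx; rewrite big_cons /=.
set T := \sum_(y <- xs) y => IHT HT /andP[hx0 hx1].
have h1 : 0 <= x * (1 - x) by apply: mulr_ge0; lra.
have h2 : 0 <= T * (1 - x) by apply: mulr_ge0; lra.
nra.
Qed.

Lemma rank_cost_upper (c : R) (xs : seq R) :
  (forall k, (k.+1 < size xs)%N -> c <= nth 0 xs k) ->
  let p := (size xs)%:R in
  rank_cost xs <= p * \sum_(y <- xs) y - c * p * (p - 1) / 2.
Proof.
elim: xs => [|x xs IH] Hxs /=; first by rewrite big_nil; lra.
move: (IH (fun k hk => Hxs k.+1 hk)); rewrite big_cons /=.
set T := \sum_(y <- xs) y => IHT.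
have Hcx : (size xs)%:R * c <= (size xs)%:R * x :> R.
  case E: (size xs) => [|q]; first by rewrite !mul0r.
  by apply: ler_wpM2l; [exact: ler0n | apply: (Hxs 0%N); rewrite /= E].
have -> : (size xs).+1%:R = (size xs)%:R + 1 :> R by rewrite -addn1 natrD.
move: IHT Hcx; set q := (size xs)%:R => IHT Hcx.
nra.
Qed.

(* The arithmetic heart of the 3/2 ratio: for p >= 2 bins,
   p W - p (p - 1) / 3 <= 3/2 * W (W + 1) / 2, since the difference is
   3/4 (W - (2/3 p - 1/2))^2 + p / 6 - 3 / 16. *)
Lemma three_halves_bound (p W : R) :
  2 <= p -> p * W - 2 / 3 * p * (p - 1) / 2 <= 3 / 2 * (W * (W + 1) / 2).
Proof.
move=> Hp.
have Hsq : 0 <= (W - (2 / 3 * p - 1 / 2)) ^+ 2 by apply: sqr_ge0.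
rewrite expr2 in Hsq; nra.
Qed.

End RankCost.

Section Packing.
Variables (R : realFieldType) (n : nat) (s w : 'I_n -> R).

Lemma cost_rank_cost (B : seq (seq 'I_n)) :
  cost w B = rank_cost (map (bin_weight w) B).
Proof.
elim: B => [|b B IH]; first by rewrite /cost big_ord0.
rewrite /cost /= big_ord_recl -IH /cost big_cons mul1r -addrA; congr (_ + _).
rewrite big_map (big_nth [::]) big_mkord -big_split /=.
by apply: eq_bigr => k _; rewrite -addn1 natrD mulrDl mul1r addrC.
Qed.

Lemma bin_weights_sum (B : seq (seq 'I_n)) :
  perm_eq (flatten B) (enum 'I_n) ->
  \sum_(x <- map (bin_weight w) B) x = \sum_(i <- enum 'I_n) w i.
Proof. by move=> HB; rewrite big_map -(perm_big _ HB) big_flatten. Qed.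

Lemma ff_insert_perm (i : 'I_n) (bins : seq (seq 'I_n)) :
  perm_eq (flatten (ff_insert s i bins)) (i :: flatten bins).
Proof.
elim: bins => [|b bs IH] //=; case: ifP => _ /=.
  by rewrite -cat_cons perm_cat2r perm_rcons.
by rewrite -cat1s perm_sym perm_catCA perm_cat2l perm_sym.
Qed.

Lemma first_fit_perm (order : seq 'I_n) :
  perm_eq (flatten (first_fit s order)) order.
Proof.
suff Hgen bins : perm_eq (flatten (foldl (fun bins i => ff_insert s i bins)
                                         bins order)) (flatten bins ++ order).
  exact: Hgen [::].
elim: order bins => [|i ord IH] bins /=; first by rewrite cats0.
apply: perm_trans (IH _) _.
apply: perm_trans (perm_cat (ff_insert_perm i bins) (perm_refl ord)) _.
by rewrite -cat1s -catA perm_catCA.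
Qed.

Lemma wffir_perm (order : seq 'I_n) :
  wffi_order s w order -> perm_eq (flatten (wffir s w order)) (enum 'I_n).
Proof.
case/andP=> Hord _; apply: perm_trans _ Hord.
apply: perm_trans _ (first_fit_perm order).
by apply: perm_flatten; rewrite perm_sort.
Qed.

Lemma wffir_sorted (order : seq 'I_n) :
  sorted >=%R (map (bin_weight w) (wffir s w order)).
Proof.
rewrite sorted_map; apply: sort_sorted => b1 b2; exact: le_total.
Qed.

End Packing.

Theorem claim1 (R : realFieldType) (n : nat) (s w : 'I_n -> R)
    (hs : forall i, 0 < s i <= 1) (hw : forall i, 0 < w i)
    (hsw : forall i, s i = w i)
    (order : seq 'I_n) (hord : wffi_order s w order) :
  let B := wffir s w order in
  (2 <= size B)%N ->
  2 / 3 < bin_weight w (nth [::] B (size B - 2)%N) ->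
  forall B' : seq (seq 'I_n), feasible s B' ->
    cost w B <= 3 / 2 * cost w B'.
Proof.
move=> B Hp Hlast B' [HB' Hbins].
rewrite !cost_rank_cost.
set W := \sum_(i <- enum 'I_n) w i.
have Hopt : W * (W + 1) / 2 <= rank_cost (map (bin_weight w) B').
  rewrite /W -(bin_weights_sum w HB'); apply: rank_cost_lower.
  move=> x /mapP [b Hb ->]; apply/andP; split.
    by apply: sumr_ge0 => j _; exact: ltW.
  by rewrite /bin_weight -(eq_bigr _ (fun j _ => hsw j)); case: (Hbins b Hb).
have Hwffir : rank_cost (map (bin_weight w) B) <=
    (size B)%:R * W - 2 / 3 * (size B)%:R * ((size B)%:R - 1) / 2.
  rewrite /W -(bin_weights_sum w (wffir_perm hord)) -(size_map (bin_weight w)).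
  apply: rank_cost_upper => k; rewrite size_map => Hk.
  apply: le_trans (ltW Hlast) _; rewrite -!(nth_map [::] 0) ?size_map; try lia.
  apply: (sorted_leq_nth ge_trans lexx 0 (wffir_sorted _ _ _));
    rewrite ?inE ?size_map -/B; lia.
apply: le_trans Hwffir _.
apply: le_trans (three_halves_bound _ _) _; first by rewrite (ler_nat R 2).
by rewrite ler_pM2l //; lra.
Qed.
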